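(* Let $k\ge2$, $q$, $r$ be integers with $1\le q\le k-1$, $0\le r\le k$, and $r\equiv k \pmod 2$. Let $\beta>0$, $J\in\mathbb{R}$, $\theta=\tanh(\beta J)$, $f_\theta(h)=\operatorname{arctanh}(\theta\tanh h)$, and let $(h_1,h_2)$ be any real solution of $h_1=q f_\theta(h_2)$, $h_2=k f_\theta(h_1)$. Let $h=\{h_x\}_{x\in V}$ be an alternating boundary condition with parameters $q,r,h_1,h_2$ on the half tree (defined in the context), and let $$a(t)=-\frac{1}{2\beta}\ln\big[4\cosh(t+\beta J)\cosh(t-\beta J)\big],\qquad F_n(h)=-\frac{1}{\beta|V_n|}\ln Z_n(h).$$ (a) If $r\neq0$, then $\lim_{n\to\infty}F_n(h)$ exists (whatever the value of $h$ at the root) and equals $$\frac{k(k-q)}{2k^2-rk-rq}\left(a(0)+\frac{k-r}{k-q}\,a(h_1)+\frac{q(k-r)}{k(k-q)}\,a(h_2)\right).$$ (b) If $r=0$ and the root value is $0$, $h_2$ or $-h_2$, then $$\lim_{m\to\infty}F_{2m}(h)=\frac{k-q}{k+1}a(0)+\frac{1}{k+1}a(h_1)+\frac{q}{k+1}a(h_2),\qquad \lim_{m\to\infty}F_{2m+1}(h)=\frac{k-q}{k(k+1)}a(0)+\frac{k}{k+1}a(h_1)+\frac{q}{k(k+1)}a(h_2);$$ if $r=0$ and the root value is $h_1$ or $-h_1$, then $$\lim_{m\to\infty}F_{2m}(h)=\frac{k-q}{k(k+1)}a(0)+\frac{k}{k+1}a(h_1)+\frac{q}{k(k+1)}a(h_2),\qquad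 \lim_{m\to\infty}F_{2m+1}(h)=\frac{k-q}{k+1}a(0)+\frac{1}{k+1}a(h_1)+\frac{q}{k+1}a(h_2).$$
   Context: Half tree: a rooted tree with vertex set $V$ and root $x^0$ in which every vertex (including the root) has exactly $k$ children; so the root has $k$ neighbours and every other vertex has $k+1$. $d(x,y)$ is the graph distance, $V_n=\{x: d(x,x^0)\le n\}$, $W_n=\{x:d(x,x^0)=n\}$, and for $x\in W_n$, $S(x)=\{y\in W_{n+1}: d(x,y)=1\}$ (the $k$ children of $x$). Ising model with zero external field: for a boundary condition $h=\{h_x\in\mathbb{R}\}_{x\in V}$, $$Z_n(h)=\sum_{\sigma\in\{-1,1\}^{V_n}}\exp\Big\{\beta J\sum_{\langle x,y\rangle\subset V_n}\sigma(x)\sigma(y)+\sum_{x\in W_n}h_x\sigma(x)\Big\},$$ where the first sum is over nearest-neighbour pairs with both endpoints in $V_n$. Alternating boundary condition with parameters $q,r,h_1,h_2$: the root is assigned a value $h_{x^0}\in\{0,\pm h_1,\pm h_2\}$, and values are assigned inductively to children: (i) if $h_x=0$, then $h_y=0$ on $r$ vertices $y\in S(x)$, $h_y=h_1$ on half of the remaining $k-r$ vertices of $S(x)$, and $h_y=-h_1$ on the other half; (ii) if $h_x=h_1$ (resp. $-h_1$), then $h_y=h_2$ (resp. $-h_2$) on $q$ vertices of $S(x)$ and $h_y=0$ on the other $k-q$; (iii) if $h_x=h_2$ (resp. $-h_2$), then $h_y=h_1$ (resp. $-h_1$) for all $y\in S(x)$. (The choice of which children receive which values is arbitrary.) *)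

From HB Require Import structures.
From mathcomp Require Import all_boot all_order all_algebra.
From mathcomp Require Import all_classical all_reals all_analysis.
Set Implicit Arguments. Unset Strict Implicit. Unset Printing Implicit Defensive.
Import Order.TTheory GRing.Theory Num.Theory.
Local Open Scope ring_scope.

Definition cosh {R : realType} (x : R) : R := (expR x + expR (- x)) / 2.
Definition tanh {R : realType} (x : R) : R :=
  (expR x - expR (- x)) / (expR x + expR (- x)).
Definition artanh {R : realType} (x : R) : R := ln ((1 + x) / (1 - x)) / 2.

Definition f_theta {R : realType} (theta h : R) : R := artanh (theta * tanh h).

(* A vertex is a word over 'I_k; the root x^0 is [::]; the k children of w
   are i :: w (i : 'I_k); the parent of a non-root w is behead w;
   d(w, x^0) = size w. *)
Definition vertex (k : nat) := seq 'I_k.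

Fixpoint words (k n : nat) : seq (vertex k) :=
  if n is m.+1 then [::] :: [seq i :: w | i <- enum 'I_k, w <- words k m]
  else [:: [::]].

Definition Vn (k n : nat) := seq_sub (words k n).

Definition spin {R : realType} (b : bool) : R := if b then 1 else -1.

(* extension of a configuration on V_n to all vertices (value irrelevant
   outside V_n) *)
Definition ext {k n : nat} (s : {ffun Vn k n -> bool}) (w : vertex k) : bool :=
  if insub w is Some u then s u else false.

(* Hamiltonian exponent: beta J sum over edges <x,y> in V_n (each edge is
   {x, parent x} with x non-root) + sum over x in W_n of h_x sigma(x) *)
Definition energy {R : realType} (k n : nat) (beta J : R) (h : vertex k -> R)
    (s : {ffun Vn k n -> bool}) : R :=
  beta * J * (\sum_(x : Vn k n | size (val x) != 0%N)
                 spin (s x) * spin (ext s (behead (val x))))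
  + \sum_(x : Vn k n | size (val x) == n) h (val x) * spin (s x).

Definition Zn {R : realType} (k n : nat) (beta J : R) (h : vertex k -> R) : R :=
  \sum_(s : {ffun Vn k n -> bool}) expR (energy beta J h s).

Definition Fn {R : realType} (k n : nat) (beta J : R) (h : vertex k -> R) : R :=
  - (beta * #|{: Vn k n}|%:R)^-1 * ln (Zn n beta J h).

Definition a_fun {R : realType} (beta J t : R) : R :=
  - (2 * beta)^-1 * ln (4 * cosh (t + beta * J) * cosh (t - beta * J)).

Inductive lab := L0 | Lp1 | Lm1 | Lp2 | Lm2.

Definition lab_eqb (a b : lab) : bool :=
  match a, b with
  | L0, L0 | Lp1, Lp1 | Lm1, Lm1 | Lp2, Lp2 | Lm2, Lm2 => true
  | _, _ => false
  end.

Lemma lab_eqP : Equality.axiom lab_eqb.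
Proof. by case; case; constructor. Qed.
HB.instance Definition _ := hasDecEq.Build lab lab_eqP.

Definition lab_val {R : realType} (h1 h2 : R) (a : lab) : R :=
  match a with
  | L0 => 0 | Lp1 => h1 | Lm1 => - h1 | Lp2 => h2 | Lm2 => - h2
  end.

Definition nchild {k : nat} (l : vertex k -> lab) (x : vertex k) (a : lab) : nat :=
  #|[pred i : 'I_k | l (i :: x) == a]|.

Definition alternating_bc (k q r : nat) (l : vertex k -> lab) : Prop :=
  forall x : vertex k,
    match l x with
    | L0 => [/\ nchild l x L0 = r, nchild l x Lp1 = (k - r)./2
              & nchild l x Lm1 = (k - r)./2]
    | Lp1 => nchild l x Lp2 = q /\ nchild l x L0 = (k - q)%N
    | Lm1 => nchild l x Lm2 = q /\ nchild l x L0 = (k - q)%N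
    | Lp2 => nchild l x Lp1 = k
    | Lm2 => nchild l x Lm1 = k
    end.

Definition bc {R : realType} {k : nat} (h1 h2 : R) (l : vertex k -> lab) :
  vertex k -> R := fun x => lab_val h1 h2 (l x).

Arguments alternating_bc : clear implicits.
Arguments Fn {R} k n beta J h.

(* Summing out the spin at a vertex turns each edge into a one-site factor:
   for b = +-1, sum_c exp(c (beta J b + v)) = exp(-beta a(v)) exp(b f_theta(v)).
   Hence if every h_x is the sum of f_theta(h_y) over the children y of x,
   which the equations for h1, h2 guarantee for an alternating boundary
   condition, then Z_n(h) = exp(-beta sum_(x in V_n) a(h_x)) cosh(f_theta(h_root)) / cosh(beta J),
   and F_n(h) is, up to O(1/|V_n|), the average of a(h_x) over V_n.
   For the alternating labelling the sums of a(h_x) over subtrees depend only on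
   the level (0, h1 or h2) of the subtree root and obey a linear recurrence whose
   matrix has row sums k.  Since |V_n| ~ k^(n+1)/(k-1), the averages converge
   to the weighted mean given by the left eigenvector for the eigenvalue k when
   the two other eigenvalues, the roots of X^2 - (r-k) X - r q, are smaller
   than k in modulus, i.e. when r > 0; when r = 0 the eigenvalue -k makes them
   oscillate with the parity of n. *)

From HB Require Import structures.
From mathcomp Require Import all_boot all_order all_algebra.
From mathcomp Require Import all_classical all_reals all_analysis.
From mathcomp Require Import ring lra zify.
Import Order.TTheory GRing.Theory Num.Theory.
Import numFieldNormedType.Exports.
Local Open Scope classical_set_scope.
Local Open Scope ring_scope.

Set Implicit Arguments. Unset Strict Implicit. Unset Printing Implicit Defensive.

Section Words.
Variable k : nat.

Lemma mem_words n w : (w \in words k n) = (size w <= n)%N.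
Proof.
elim: n w => [|n IHn] [|i w] //=; rewrite in_cons /=.
apply/allpairsP/idP => [[[j u]] /= [_ u_n [_ ->]]|w_n]; first by rewrite ltnS -IHn.
by exists (i, w); rewrite /= mem_enum IHn.
Qed.

Lemma uniq_words n : uniq (words k n).
Proof.
elim: n => [|n IHn] //=; apply/andP; split.
  by apply/allpairsP => [[[i w] /= [_ _]]].
apply: allpairs_uniq => //; first exact: enum_uniq.
by move=> [i w] [j u] _ _ /= [-> ->].
Qed.

Lemma card_Vn n : #|{: Vn k n}| = size (words k n).
Proof. exact: card_seq_sub (uniq_words n). Qed.

Lemma size_wordsS n : size (words k n.+1) = (size (words k n) * k).+1.
Proof. by rewrite /= size_allpairs size_enum_ord mulnC. Qed.

Lemma root_in_words n : [::] \in words k n.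
Proof. by rewrite mem_words. Qed.

Lemma big_Vn {V : nmodType} n (P : pred (vertex k)) (g : vertex k -> V) :
  \sum_(x : Vn k n | P (val x)) g (val x) = \sum_(w <- words k n | P w) g w.
Proof.
rewrite -[in RHS](val_seq_sub_enum (uniq_words n)) big_map.
by rewrite /index_enum !unlock.
Qed.

Lemma big_words_root {V : nmodType} n (f : vertex k -> V) :
  \sum_(w <- words k n) f w = f [::] + \sum_(w <- words k n | size w != 0%N) f w.
Proof.
rewrite (bigD1_seq [::]) ?root_in_words ?uniq_words //=; congr (_ + _).
by apply: eq_bigl => w; rewrite size_eq0.
Qed.

(* The subtree of the [i]-th child of the root consists of the words ending
   with [i]. *)
Lemma perm_words_rcons n :
  perm_eq (words k n.+1) ([::] :: [seq rcons w i | i <- enum 'I_k, w <- words k n]).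
Proof.
apply: uniq_perm; first exact: uniq_words.
  rewrite /=; apply/andP; split.
    by apply/allpairsP => [[[i w] /= [_ _]]]; case: w.
  apply: allpairs_uniq; [exact: enum_uniq|exact: uniq_words|].
  by move=> [i w] [j u] _ _ /= /rcons_inj [-> ->].
move=> [|x w]; rewrite mem_words in_cons //=; apply/idP/allpairsP.
  rewrite ltnS => w_n; exists (last x w, belast x w) => /=.
  by rewrite mem_enum mem_words size_belast -lastI.
case=> [[i u]] /= [_]; rewrite mem_words => u_n xw_eq.
by rewrite -ltnS -[X in (X < _)%N]/(size (x :: w)) xw_eq size_rcons.
Qed.

Lemma big_words_rcons {V : nmodType} n (P : pred (vertex k)) (f : vertex k -> V) :
  \sum_(w <- words k n.+1 | P w) f w = (if P [::] then f [::] else 0) +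
     \sum_(i < k) \sum_(u <- words k n | P (rcons u i)) f (rcons u i).
Proof.
rewrite (perm_big _ (perm_words_rcons n)) big_mkcond big_cons big_allpairs_dep.
by rewrite big_enum; congr (_ + _); apply: eq_bigr => i _; rewrite [RHS]big_mkcond.
Qed.

End Words.

Section Configurations.
Variable k : nat.

Lemma ext_val n (s : {ffun Vn k n -> bool}) (u : Vn k n) : ext s (val u) = s u.
Proof. by rewrite /ext valK. Qed.

Lemma ext_out n (s : {ffun Vn k n -> bool}) w : (n < size w)%N -> ext s w = false.
Proof.
move=> n_w; rewrite /ext; case: insubP => // u; rewrite mem_words => w_n.
by rewrite leqNgt n_w in w_n.
Qed.

Lemma ext_root n (s : {ffun Vn k n -> bool}) : ext s [::] = s (Sub [::] (root_in_words k n)).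
Proof. by rewrite -ext_val. Qed.

(* Spin configuration on V_(n+1) with root spin [b] and the configuration
   [F i] on the subtree of the [i]-th child. *)
Definition graft n (b : bool) (F : {ffun 'I_k -> {ffun Vn k n -> bool}}) :
  {ffun Vn k n.+1 -> bool} :=
  [ffun x => if val x is y :: ys then ext (F (last y ys)) (belast y ys) else b].

Lemma ext_graft_root n b F : ext (@graft n b F) [::] = b.
Proof. by rewrite ext_root ffunE. Qed.

Lemma ext_graft_rcons n b F u i : ext (@graft n b F) (rcons u i) = ext (F i) u.
Proof.
have [u_n|n_u] := leqP (size u) n; last by rewrite !ext_out // size_rcons ltnS.
have ui_n : rcons u i \in words k n.+1 by rewrite mem_words size_rcons.
rewrite -[rcons u i]/(val (Sub (rcons u i) ui_n : Vn k n.+1)) ext_val ffunE /=.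
by case: u {u_n ui_n} => [|y ys] //=; rewrite ?last_rcons ?belast_rcons.
Qed.

Lemma graft_bij n : bijective (fun p => @graft n p.1 p.2).
Proof.
exists (fun s => (ext s [::], [ffun i => [ffun w : Vn k n => ext s (rcons (val w) i)]])).
  case=> b F /=; rewrite ext_graft_root; congr pair.
  by apply/ffunP => i; apply/ffunP => w; rewrite !ffunE ext_graft_rcons ext_val.
move=> s; apply/ffunP => x; rewrite ffunE /=.
case x_eq: (val x) => [|y ys]; first by rewrite -(ext_val s x) x_eq.
have ys_n : belast y ys \in words k n.
  by have := valP x; rewrite x_eq !mem_words /= size_belast ltnS.
rewrite -[belast y ys]/(val (Sub (belast y ys) ys_n : Vn k n)) ext_val !ffunE SubK.
by rewrite -lastI -x_eq ext_val.
Qed.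

Lemma sum_graft {V : nmodType} n (G : {ffun Vn k n.+1 -> bool} -> V) :
  \sum_s G s = \sum_(b : bool) \sum_(F : {ffun 'I_k -> {ffun Vn k n -> bool}}) G (graft b F).
Proof.
rewrite (reindex (fun p => @graft n p.1 p.2)); last exact/onW_bij/graft_bij.
by rewrite pair_big.
Qed.

Lemma sum_config0 {V : nmodType} (G : {ffun Vn k 0 -> bool} -> V) :
  \sum_s G s = \sum_(c : bool) G [ffun => c].
Proof.
rewrite (reindex (fun c : bool => [ffun => c])) //; apply/onW_bij.
exists (fun s => ext s [::]) => [c|s]; first by rewrite ext_root ffunE.
apply/ffunP => x; rewrite ffunE.
by have := valP x; rewrite mem_words leqn0 size_eq0 => /eqP <-; rewrite ext_val.
Qed.

End Configurations.

Definition subtree {k : nat} {T : Type} (g : vertex k -> T) (i : 'I_k) : vertex k -> T :=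
  fun w => g (rcons w i).

Section Hyperbolic.
Variable R : realType.

Lemma coshN (x : R) : cosh (- x) = cosh x.
Proof. by rewrite /cosh opprK addrC. Qed.

Lemma cosh_gt0 (x : R) : 0 < cosh x.
Proof. by rewrite divr_gt0 ?addr_gt0 ?expR_gt0. Qed.

Lemma two_cosh_gt0 (x : R) : 0 < 2 * cosh x.
Proof. by rewrite pmulr_rgt0 // cosh_gt0. Qed.

Lemma sum_spin_expR (t : R) : \sum_(c : bool) expR (spin c * t) = 2 * cosh t.
Proof. by rewrite big_bool /= mul1r mulN1r /cosh mulrC divfK // pnatr_eq0. Qed.

Lemma tanh_mul (x y : R) :
  tanh x * tanh y = (cosh (y + x) - cosh (y - x)) / (cosh (y + x) + cosh (y - x)).
Proof.
have ex := expR_gt0 x; have ey := expR_gt0 y.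
rewrite /tanh /cosh !(expRD, expRN); field.
by rewrite !gt_eqF.
Qed.

Lemma artanh_ratio (P M : R) : 0 < P -> 0 < M ->
  artanh ((P - M) / (P + M)) = (ln P - ln M) / 2.
Proof.
move=> P_gt0 M_gt0; rewrite /artanh -ln_div ?posrE //; congr (ln _ / 2).
by field; apply/and3P; split; apply: lt0r_neq0; lra.
Qed.

Lemma f_theta_tanh (x y : R) :
  f_theta (tanh x) y = (ln (2 * cosh (y + x)) - ln (2 * cosh (y - x))) / 2.
Proof.
rewrite /f_theta tanh_mul -artanh_ratio ?two_cosh_gt0 //; apply: congr1.
by field; rewrite !gt_eqF ?addr_gt0 ?two_cosh_gt0 ?cosh_gt0.
Qed.

End Hyperbolic.

Section PartitionFunction.
Variables (R : realType) (k : nat) (beta J : R).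

Definition energy_words n (h : vertex k -> R) (sg : vertex k -> bool) : R :=
  beta * J * (\sum_(w <- words k n | size w != 0%N) spin (sg w) * spin (sg (behead w)))
  + \sum_(w <- words k n | size w == n) h w * spin (sg w).

Lemma energy_wordsE n h (s : {ffun Vn k n -> bool}) :
  energy beta J h s = energy_words n h (ext s).
Proof.
rewrite /energy /energy_words -!(big_Vn (V:=R) n).
by congr (_ * _ + _); apply: eq_bigr => x _; rewrite ext_val.
Qed.

Lemma energy_words_graft n h b F :
  energy_words n.+1 h (ext (@graft k n b F)) =
  \sum_(i < k) (beta * J * (spin b * spin (ext (F i) [::]))
                + energy_words n (subtree h i) (ext (F i))).
Proof.
rewrite /energy_words !big_words_rcons /= !add0r.
under [RHS]eq_bigr do rewrite addrA -mulrDr.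
rewrite big_split /= -mulr_sumr; congr (_ * _ + _).
  apply: eq_bigr => i _; rewrite (eq_bigl xpredT); last by move=> u; rewrite size_rcons.
  rewrite big_words_root ext_graft_rcons ext_graft_root mulrC.
  congr (_ + _); apply: eq_bigr => [[|x u]] // _.
  by rewrite !ext_graft_rcons.
apply: eq_bigr => i _.
rewrite (eq_bigl (fun u => size u == n)); last by move=> u; rewrite size_rcons.
by apply: eq_bigr => u _; rewrite ext_graft_rcons.
Qed.

(* Partition function of V_n with one more edge, from the root to a parent of
   spin [b]. *)
Definition Zpar n (h : vertex k -> R) (b : bool) : R :=
  \sum_(s : {ffun Vn k n -> bool})
     expR (beta * J * (spin b * spin (ext s [::])) + energy beta J h s).

Lemma Zpar_sum n h : \sum_(b : bool) Zpar n h b = 2 * cosh (beta * J) * Zn n beta J h.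
Proof.
rewrite exchange_big /Zn mulr_sumr; apply: eq_bigr => s _.
under eq_bigr do rewrite expRD.
rewrite -mulr_suml; congr (_ * _).
under eq_bigr do rewrite mulrCA.
rewrite sum_spin_expR.
by case: (ext s [::]); rewrite /= ?mulr1 ?mulrN1 ?coshN.
Qed.

Lemma Zpar_S n h b : Zpar n.+1 h b =
  \sum_(c : bool) expR (beta * J * (spin b * spin c)) * \prod_(i < k) Zpar n (subtree h i) c.
Proof.
rewrite /Zpar sum_graft; apply: eq_bigr => c _.
under eq_bigr do rewrite energy_wordsE energy_words_graft ext_graft_root expRD expR_sum.
rewrite -mulr_sumr bigA_distr_bigA; congr (_ * _).
by apply: eq_bigr => F _; apply: eq_bigr => i _; rewrite energy_wordsE.
Qed.

Lemma Zpar_0 h b : Zpar 0 h b = \sum_(c : bool) expR (spin c * (beta * J * spin b + h [::])).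
Proof.
rewrite /Zpar sum_config0; apply: eq_bigr => c _.
rewrite energy_wordsE /energy_words /= !big_cons !big_nil /=.
by rewrite ext_root ffunE; congr expR; ring.
Qed.

End PartitionFunction.

Section EdgeFactorization.
Variables (R : realType) (beta J : R).
Hypothesis beta_gt0 : 0 < beta.
Local Notation f := (f_theta (tanh (beta * J))).
Local Notation a := (a_fun beta J).

Lemma a_funE v :
  - beta * a v = (ln (2 * cosh (v + beta * J)) + ln (2 * cosh (v - beta * J))) / 2.
Proof.
rewrite /a_fun -lnM ?posrE ?two_cosh_gt0 //.
have -> : 2 * cosh (v + beta * J) * (2 * cosh (v - beta * J)) =
          4 * cosh (v + beta * J) * cosh (v - beta * J) by ring.
by field; rewrite gt_eqF.
Qed.

Lemma sum_edge_spin v b : \sum_(c : bool) expR (spin c * (beta * J * spin b + v)) =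
  expR (- beta * a v) * expR (spin b * f v).
Proof.
rewrite sum_spin_expR a_funE f_theta_tanh -expRD.
case: b => /=; rewrite ?mulr1 ?mulN1r ?mul1r.
  have -> : forall P M : R, (P + M) / 2 + (P - M) / 2 = P by move=> P M; field.
  by rewrite lnK ?posrE ?two_cosh_gt0 // addrC.
have -> : forall P M : R, (P + M) / 2 + - ((P - M) / 2) = M by move=> P M; field.
by rewrite lnK ?posrE ?two_cosh_gt0 // addrC mulrN1.
Qed.

Let oppr_addJ v : - v + beta * J = - (v - beta * J). Proof. by rewrite opprB addrC. Qed.
Let oppr_subJ v : - v - beta * J = - (v + beta * J). Proof. by rewrite opprD. Qed.

Lemma f_thetaN v : f (- v) = - f v.
Proof. by rewrite !f_theta_tanh oppr_addJ oppr_subJ !coshN; lra. Qed.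

Lemma f_theta0 : f 0 = 0.
Proof. by have := f_thetaN 0; rewrite oppr0; lra. Qed.

Lemma a_funN v : a (- v) = a v.
Proof. by rewrite /a_fun oppr_addJ oppr_subJ !coshN mulrAC. Qed.

End EdgeFactorization.

Section CompatibleBoundary.
Variables (R : realType) (k : nat) (beta J : R).
Hypothesis beta_gt0 : 0 < beta.
Local Notation f := (f_theta (tanh (beta * J))).
Local Notation a := (a_fun beta J).

Definition compatible (h : vertex k -> R) :=
  forall x, h x = \sum_(i < k) f (h (i :: x)).

Definition sum_a n (h : vertex k -> R) : R := \sum_(w <- words k n) a (h w).

Lemma sum_a0 h : sum_a 0 h = a (h [::]).
Proof. exact: big_seq1. Qed.

Lemma sum_aS n h : sum_a n.+1 h = a (h [::]) + \sum_(i < k) sum_a n (subtree h i).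
Proof. by rewrite /sum_a (big_words_rcons _ xpredT). Qed.

Lemma compatible_subtree h i : compatible h -> compatible (subtree h i).
Proof. by move=> h_compat x; rewrite /subtree h_compat. Qed.

Lemma Zpar_compatible n h b : compatible h ->
  Zpar beta J n h b = expR (- beta * sum_a n h) * expR (spin b * f (h [::])).
Proof.
elim: n h b => [|n IHn] h b h_compat; first by rewrite Zpar_0 sum_edge_spin // sum_a0.
rewrite Zpar_S sum_aS; set S := \sum_(i < k) _.
have prod_Zpar c : \prod_(i < k) Zpar beta J n (subtree h i) c =
                   expR (- beta * S) * expR (spin c * h [::]).
  rewrite (eq_bigr _ (fun i _ => IHn _ c (compatible_subtree i h_compat))).
  by rewrite big_split /= -!expR_sum -!mulr_sumr -(h_compat [::]).
have edge_term c :
    expR (beta * J * (spin b * spin c)) * (expR (- beta * S) * expR (spin c * h [::])) =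
    expR (- beta * S) * expR (spin c * (beta * J * spin b + h [::])).
  by rewrite mulrCA -!expRD; apply: congr1; ring.
under eq_bigr do rewrite prod_Zpar edge_term.
by rewrite -mulr_sumr sum_edge_spin // mulrA -expRD; congr (expR _ * _); ring.
Qed.

Definition root_correction (h : vertex k -> R) : R :=
  (ln (cosh (f (h [::]))) - ln (cosh (beta * J))) / beta.

Lemma Fn_compatible n h : compatible h ->
  Fn k n beta J h = (sum_a n h - root_correction h) / #|{: Vn k n}|%:R.
Proof.
move=> h_compat.
have Z_eq : Zn n beta J h = expR (- beta * sum_a n h) * cosh (f (h [::])) / cosh (beta * J).
  apply: (@mulfI _ (2 * cosh (beta * J))); first by rewrite gt_eqF ?two_cosh_gt0.
  rewrite -Zpar_sum; under eq_bigr do rewrite Zpar_compatible //.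
  rewrite -mulr_sumr sum_spin_expR; field; exact: lt0r_neq0 (cosh_gt0 _).
have V_gt0 : (0 < #|{: Vn k n}|)%N by apply/card_gt0P; exists (Sub [::] (root_in_words k n)).
have [X_gt0 c_gt0] := (expR_gt0 (- beta * sum_a n h), cosh_gt0 (f (h [::]))).
rewrite /Fn Z_eq (ln_div (mulr_gt0 X_gt0 c_gt0) (cosh_gt0 _)) (lnM X_gt0 c_gt0) expRK.
rewrite /root_correction.
by field; rewrite pnatr_eq0 -lt0n V_gt0 gt_eqF.
Qed.

End CompatibleBoundary.

Section Labels.
Variables (k : nat) (l : vertex k -> lab).

Lemma sum_children (S : pzSemiRingType) x (g : lab -> S) :
  \sum_(i < k) g (l (i :: x)) =
  \sum_(c <- [:: L0; Lp1; Lm1; Lp2; Lm2]) (nchild l x c)%:R * g c.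
Proof.
transitivity (\sum_(i < k) \sum_(c <- [:: L0; Lp1; Lm1; Lp2; Lm2]) (l (i :: x) == c)%:R * g c).
  apply: eq_bigr => i _; rewrite !big_cons big_nil.
  by case: (l (i :: x)); rewrite /= ?mul1r ?mul0r ?add0r ?addr0.
rewrite exchange_big; apply: eq_bigr => c _.
rewrite -mulr_suml -natr_sum /nchild -sum1_card [in RHS]big_mkcond.
by congr (_%:R * _); apply: eq_bigr => i _; rewrite inE; case: (_ == _).
Qed.

Lemma nchild_sum x :
  (nchild l x L0 + nchild l x Lp1 + nchild l x Lm1 + nchild l x Lp2 + nchild l x Lm2)%N = k.
Proof.
have := sum_children x (fun _ => 1%N).
by rewrite sum1_card card_ord !big_cons big_nil /= !natn ?muln1 ?mulr1; lia.
Qed.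

End Labels.

Section AltSums.
Variables (R : realType) (k q r a0 a1 a2 : R).

Fixpoint alt_sums n : R * R * R :=
  if n is m.+1 then
    let: (x0, x1, x2) := alt_sums m in
    (a0 + r * x0 + (k - r) * x1, a1 + (k - q) * x0 + q * x2, a2 + k * x1)
  else (a0, a1, a2).

Definition alt_sum0 n := (alt_sums n).1.1.
Definition alt_sum1 n := (alt_sums n).1.2.
Definition alt_sum2 n := (alt_sums n).2.

Lemma alt_sum0S n : alt_sum0 n.+1 = a0 + r * alt_sum0 n + (k - r) * alt_sum1 n.
Proof. by rewrite /alt_sum0 /alt_sum1 /=; case: (alt_sums n) => [[]]. Qed.

Lemma alt_sum1S n : alt_sum1 n.+1 = a1 + (k - q) * alt_sum0 n + q * alt_sum2 n.
Proof. by rewrite /alt_sum0 /alt_sum1 /alt_sum2 /=; case: (alt_sums n) => [[]]. Qed.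

Lemma alt_sum2S n : alt_sum2 n.+1 = a2 + k * alt_sum1 n.
Proof. by rewrite /alt_sum1 /alt_sum2 /=; case: (alt_sums n) => [[]]. Qed.

Definition alt_sum n (c : lab) : R :=
  match c with L0 => alt_sum0 n | Lp1 | Lm1 => alt_sum1 n | Lp2 | Lm2 => alt_sum2 n end.

End AltSums.

Section AlternatingBC.
Variables (R : realType) (k q r : nat) (beta J h1 h2 : R).
Hypotheses (q_le_k : (q <= k)%N) (r_le_k : (r <= k)%N) (odd_r : odd r = odd k).
Local Notation f := (f_theta (tanh (beta * J))).
Local Notation a := (a_fun beta J).

Lemma alternating_subtree l i : alternating_bc k q r l -> alternating_bc k q r (subtree l i).
Proof. by move=> l_alt x; apply: l_alt. Qed.

Lemma sum_children_alt l x (g : lab -> R) : alternating_bc k q r l ->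
  \sum_(i < k) g (l (i :: x)) = match l x with
    | L0 => r%:R * g L0 + (k - r)%:R / 2 * (g Lp1 + g Lm1)
    | Lp1 => q%:R * g Lp2 + (k - q)%:R * g L0
    | Lm1 => q%:R * g Lm2 + (k - q)%:R * g L0
    | Lp2 => k%:R * g Lp1
    | Lm2 => k%:R * g Lm1
    end.
Proof.
move=> l_alt; rewrite (sum_children l x g) !big_cons big_nil addr0.
have := nchild_sum l x; move: (l_alt x).
have half_kr : ((k - r)./2 + (k - r)./2)%N = (k - r)%N.
  by rewrite addnn halfK oddB // odd_r addbb subn0.
case: (l x) => [[-> -> ->]|[-> ->]|[-> ->]|->|->] count.
- have [-> ->] : nchild l x Lp2 = 0%N /\ nchild l x Lm2 = 0%N by lia.
  have -> : (k - r)%:R = 2 * ((k - r)./2)%:R :> R.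
    by rewrite -[in LHS]half_kr natrD; ring.
  by rewrite [2 * _]mulrC mulfK ?pnatr_eq0 //; ring.
- have [-> [-> ->]] :
      nchild l x Lp1 = 0%N /\ nchild l x Lm1 = 0%N /\ nchild l x Lm2 = 0%N by lia.
  by ring.
- have [-> [-> ->]] :
      nchild l x Lp1 = 0%N /\ nchild l x Lm1 = 0%N /\ nchild l x Lp2 = 0%N by lia.
  by ring.
- have [-> [-> [-> ->]]] : nchild l x L0 = 0%N /\ nchild l x Lm1 = 0%N /\
                           nchild l x Lp2 = 0%N /\ nchild l x Lm2 = 0%N by lia.
  by ring.
have [-> [-> [-> ->]]] : nchild l x L0 = 0%N /\ nchild l x Lp1 = 0%N /\
                         nchild l x Lp2 = 0%N /\ nchild l x Lm2 = 0%N by lia.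
by ring.
Qed.

Local Notation alt_sum_bc := (alt_sum k%:R q%:R r%:R (a 0) (a h1) (a h2)).

Lemma sum_a_bc n l : alternating_bc k q r l ->
  sum_a beta J n (bc h1 h2 l) = alt_sum_bc n (l [::]).
Proof.
elim: n l => [|n IHn] l l_alt.
  by rewrite sum_a0 /bc; case: (l [::]); rewrite //= a_funN.
rewrite sum_aS (eq_bigr _ (fun i _ => IHn _ (alternating_subtree i l_alt))).
rewrite (sum_children_alt [::] (alt_sum_bc n) l_alt) /bc.
by case: (l [::]); rewrite /= ?a_funN ?alt_sum0S ?alt_sum1S ?alt_sum2S ?natrB //; field.
Qed.

Hypotheses (h1_eq : h1 = q%:R * f h2) (h2_eq : h2 = k%:R * f h1).

Lemma compatible_bc l : alternating_bc k q r l -> compatible beta J (bc h1 h2 l).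
Proof.
move=> l_alt x; rewrite /bc (sum_children_alt x (fun c => f (lab_val h1 h2 c)) l_alt).
by case: (l x) => /=; rewrite ?f_thetaN ?f_theta0 ?subrr ?mulr0 ?addr0 ?mulrN -?h1_eq -?h2_eq.
Qed.

Hypothesis beta_gt0 : 0 < beta.

Lemma Fn_bc n l : alternating_bc k q r l ->
  Fn k n beta J (bc h1 h2 l) =
  (alt_sum_bc n (l [::]) - root_correction beta J (bc h1 h2 l)) / (size (words k n))%:R.
Proof.
by move=> l_alt; rewrite Fn_compatible ?sum_a_bc ?card_Vn //; apply: compatible_bc.
Qed.

End AlternatingBC.

Section AffineRecurrences.
Variable R : realType.

Lemma cvgn_near (P : nat -> Prop) :
  (\forall n \near \oo, P n) -> exists N, forall n, (N <= n)%N -> P n.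
Proof. by case=> N _ PN; exists N => n; apply: PN. Qed.

(* A perturbed contraction [e_(n+1) = lam e_n + eps_n], [|lam| < 1], forgets
   its initial value: [e_(N+m) <= d/2 + |lam|^m |e_N|] once [|eps| < d(1-|lam|)/2]. *)
Lemma cvg0_affine_rec (lam : R) (e eps : nat -> R) : `|lam| < 1 -> eps @ \oo --> 0 ->
  (forall n, e n.+1 = lam * e n + eps n) -> e @ \oo --> 0.
Proof.
move=> lam_lt1 eps0 e_rec; apply/cvgr0Pnorm_lt => d d_gt0.
set L := `|lam|; have L_ge0 : 0 <= L by rewrite normr_ge0.
have d'_gt0 : 0 < d * (1 - L) / 2 by rewrite divr_gt0 // mulr_gt0 // subr_gt0.
have [N epsN] := cvgn_near ((cvgr0Pnorm_lt eps).1 eps0 _ d'_gt0).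
have e_bound m : `|e (N + m)%N| <= d / 2 + L ^+ m * `|e N|.
  elim: m => [|m IHm]; first by rewrite addn0 expr0 mul1r lerDr divr_ge0 // ltW.
  rewrite addnS e_rec exprS; have := epsN (N + m)%N (leq_addr _ _).
  have := ler_wpM2l L_ge0 IHm; have := ler_normD (lam * e (N + m)%N) (eps (N + m)%N).
  by rewrite normrM -/L; nra.
set c := d / (2 * (`|e N| + 1)).
have c_gt0 : 0 < c by rewrite divr_gt0 // mulr_gt0 // ltr_pwDr // normr_ge0.
have [M LM] : exists M, forall m, (M <= m)%N -> L ^+ m < c.
  have L_lt1 : `|L| < 1 by rewrite normr_id.
  have [M LM] := cvgn_near ((cvgr0Pnorm_lt (GRing.exp L)).1 (cvg_expr L_lt1) _ c_gt0).
  by exists M => m /LM; rewrite ger0_norm ?exprn_ge0.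
exists (N + M)%N => // n /= n_ge; rewrite -(subnKC (leq_trans (leq_addr M N) n_ge)).
apply: le_lt_trans (e_bound _) _.
have : L ^+ (n - N) * `|e N| <= c * `|e N|.
  by rewrite ler_wpM2r ?normr_ge0 // ltW // LM // leq_subRL ?(leq_trans (leq_addr M N)).
have : c * (2 * (`|e N| + 1)) = d by rewrite divfK // gt_eqF // mulr_gt0 // ltr_pwDr // normr_ge0.
have := normr_ge0 (e N); nra.
Qed.

Lemma cvg0_scaled_affine_rec (K mu : R) (z u : nat -> R) : 0 < K -> `|mu| < K ->
  (fun n => u n / K ^+ n) @ \oo --> 0 ->
  (forall n, z n.+1 = mu * z n + u n) -> (fun n => z n / K ^+ n) @ \oo --> 0.
Proof.
move=> K_gt0 mu_lt u0 z_rec.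
apply: (@cvg0_affine_rec (mu / K) _ (fun n => u n / K ^+ n / K)).
- by rewrite normrM normfV (gtr0_norm K_gt0) ltr_pdivrMr // mul1r.
- by rewrite -(mul0r K^-1); apply: cvgM => //; exact: cvg_cst.
- by move=> n; rewrite z_rec exprS; field; rewrite expf_neq0 ?gt_eqF.
Qed.

(* Factor [X^2 - t X - d = (X - mu1)(X - mu2)] and apply the first order case twice. *)
Lemma cvg0_scaled_rec2 (K t d c mu1 mu2 : R) (z : nat -> R) : 1 < K ->
  mu1 + mu2 = t -> mu1 * mu2 = - d -> `|mu1| < K -> `|mu2| < K ->
  (forall n, z n.+2 = t * z n.+1 + d * z n + c) -> (fun n => z n / K ^+ n) @ \oo --> 0.
Proof.
move=> K_gt1 mu_sum mu_prod mu1_lt mu2_lt z_rec; have K_gt0 : 0 < K by lra.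
have c_scaled : (fun n => c / K ^+ n) @ \oo --> 0.
  under eq_fun do rewrite -exprVn.
  rewrite -(mulr0 c); apply: cvgM; first exact: cvg_cst.
  apply: cvg_expr.
  by rewrite normfV gtr0_norm // invf_lt1.
apply: (@cvg0_scaled_affine_rec K mu1 z (fun n => z n.+1 - mu1 * z n)) => //;
  last by move=> n; ring.
apply: (@cvg0_scaled_affine_rec K mu2 _ (fun => c)) => // n.
by rewrite z_rec -mu_sum -[d]opprK -mu_prod; ring.
Qed.

End AffineRecurrences.

Lemma cvgn_comp_ge (sigma : nat -> nat) : (forall m, (m <= sigma m)%N) -> sigma @ \oo --> \oo.
Proof.
move=> sigma_ge P [N _ PN]; exists N => // m /= m_ge.
by apply: PN; exact: leq_trans m_ge (sigma_ge m).
Qed.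

Section Volume.
Variables (R : realType) (K : R) (v : nat -> R).
Hypotheses (K_gt1 : 1 < K) (v0 : v 0%N = 1) (vS : forall n, v n.+1 = 1 + K * v n).

Let K_gt0 : 0 < K. Proof. exact: lt_trans ltr01 K_gt1. Qed.

Lemma volumeE n : v n = (K ^+ n.+1 - 1) / (K - 1).
Proof.
apply: (@mulIf _ (K - 1)); first by rewrite subr_eq0 gt_eqF.
rewrite divfK ?subr_eq0 ?gt_eqF //.
by elim: n => [|n IHn]; rewrite ?v0 ?expr1 ?mul1r // vS exprS mulrDl -mulrA IHn; ring.
Qed.

Lemma volume_gt0 n : 0 < v n.
Proof.
rewrite volumeE divr_gt0 ?subr_gt0 //.
by rewrite exprn_egt1 // ltW.
Qed.

Let invK_lt1 : `|K^-1| < 1.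
Proof. by rewrite normfV gtr0_norm // invf_lt1. Qed.

Lemma cvg_pow_div_volume : (fun n => K ^+ n / v n) @ \oo --> (K - 1) / K.
Proof.
have -> : (fun n => K ^+ n / v n) = (fun n => (K - 1) / (K - K^-1 ^+ n)).
  apply/funext => n; rewrite volumeE exprS exprVn.
  have Kn_gt0 : 0 < K ^+ n by rewrite exprn_gt0.
  by field; rewrite !gt_eqF ?subr_gt0 // -exprS exprn_egt1.
have := cvgM (cvg_cst (K - 1)) (cvgV _ (cvgB (cvg_cst K) (cvg_expr invK_lt1))).
by rewrite subr0; apply; rewrite gt_eqF.
Qed.

Lemma cvg_inv_volume : (fun n => (v n)^-1) @ \oo --> 0.
Proof.
have -> : (fun n => (v n)^-1) = (fun n => K ^+ n / v n * K^-1 ^+ n).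
  by apply/funext => n; rewrite exprVn mulrAC divff ?mul1r // expf_neq0 ?gt_eqF.
by rewrite -(mulr0 ((K - 1) / K)); apply: cvgM; [exact: cvg_pow_div_volume | exact: cvg_expr].
Qed.

Lemma cvg_div_volume (sigma : nat -> nat) (u : nat -> R) (al E C : R) :
  sigma @ \oo --> \oo ->
  (fun m => (u (sigma m) - al * v (sigma m)) / K ^+ sigma m) @ \oo --> E ->
  (fun m => (u (sigma m) - C) / v (sigma m)) @ \oo --> al + E * ((K - 1) / K).
Proof.
move=> sigma_oo uE.
have -> : (fun m => (u (sigma m) - C) / v (sigma m)) = (fun m =>
    al + (u (sigma m) - al * v (sigma m)) / K ^+ sigma m * (K ^+ sigma m / v (sigma m))
    - C * (v (sigma m))^-1).
  apply/funext => m; field.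
  by rewrite expf_neq0 ?gt_eqF ?volume_gt0.
rewrite -[X in _ --> X]subr0 -(mulr0 C).
apply: cvgB; last by apply: cvgM; [exact: cvg_cst | exact: cvg_comp sigma_oo cvg_inv_volume].
apply: cvgD; first exact: cvg_cst.
by apply: cvgM => //; exact: cvg_comp sigma_oo cvg_pow_div_volume.
Qed.

Lemma cvg_div_volume_2step (sigma : nat -> nat) (u : nat -> R) (al C : R) :
  (forall m, sigma m.+1 = (sigma m).+2) ->
  (forall n, u n.+2 - al * v n.+2 = K ^+ 2 * (u n - al * v n)) ->
  (fun m => (u (sigma m) - C) / v (sigma m)) @ \oo -->
     al + (u (sigma 0) - al * v (sigma 0)) / K ^+ sigma 0 * ((K - 1) / K).
Proof.
move=> sigmaS u_rec; apply: cvg_div_volume.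
  apply: cvgn_comp_ge; elim=> // m IHm.
  by rewrite sigmaS ltnS leqW.
have -> : (fun m => (u (sigma m) - al * v (sigma m)) / K ^+ sigma m) =
          (fun=> (u (sigma 0) - al * v (sigma 0)) / K ^+ sigma 0).
  apply/funext; elim=> // m IHm; rewrite -IHm sigmaS u_rec !exprS.
  by field; rewrite expf_neq0 ?gt_eqF.
exact: cvg_cst.
Qed.

End Volume.

Section AltSumLimitPositive.
Variables (R : realType) (k q r a0 a1 a2 : R) (v : nat -> R).
Hypotheses (k_gt1 : 1 < k) (q_gt0 : 0 < q) (q_lt_k : q < k) (r_gt0 : 0 < r) (r_le_k : r <= k).
Hypotheses (v0 : v 0%N = 1) (vS : forall n, v n.+1 = 1 + k * v n).
Local Notation s0 := (alt_sum0 k q r a0 a1 a2).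
Local Notation s1 := (alt_sum1 k q r a0 a1 a2).
Local Notation s2 := (alt_sum2 k q r a0 a1 a2).

Definition alt_limit : R :=
  k * (k - q) / (2 * k ^+ 2 - r * k - r * q) *
  (a0 + (k - r) / (k - q) * a1 + q * (k - r) / (k * (k - q)) * a2).

(* [(p0, p1, p2)] is a left eigenvector, for the eigenvalue [k], of the
   matrix of the recurrence defining [alt_sums]. *)
Let p0 := k * (k - q).
Let p1 := k * (k - r).
Let p2 := q * (k - r).
Let P := p0 + p1 + p2.

(* [lra] and [nra] ignore section hypotheses, hence the [move: ... => *] below. *)
Let P_gt0 : 0 < P.
Proof. by rewrite /P /p0 /p1 /p2; move: k_gt1 q_gt0 q_lt_k r_gt0 r_le_k => *; nra. Qed.

Lemma alt_limitE : alt_limit = (p0 * a0 + p1 * a1 + p2 * a2) / P.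
Proof.
rewrite /alt_limit /P /p0 /p1 /p2; field.
by move: k_gt1 q_gt0 q_lt_k r_gt0 r_le_k => *; apply/and3P; split; apply: lt0r_neq0; nra.
Qed.

Lemma alt_sum_eigen n : p0 * s0 n + p1 * s1 n + p2 * s2 n = (p0 * a0 + p1 * a1 + p2 * a2) * v n.
Proof.
elim: n => [|n IHn]; first by rewrite v0 mulr1.
rewrite vS mulrDr mulr1 [in RHS]mulrCA -IHn alt_sum0S alt_sum1S alt_sum2S /p0 /p1 /p2; ring.
Qed.

(* The two other eigenvalues [mu1], [mu2] are the roots of
   [X^2 - (r - k) X - r q]; both are smaller than [k] in absolute value. *)
Let D := Num.sqrt ((r - k) ^+ 2 + 4 * r * q).
Let mu1 := ((r - k) + D) / 2.
Let mu2 := ((r - k) - D) / 2.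

Let D_ge0 : 0 <= D. Proof. exact: sqrtr_ge0. Qed.

Let D_lt : D < k + r.
Proof.
move: k_gt1 q_gt0 q_lt_k r_gt0 r_le_k => *.
have kr_gt0 : 0 < k + r by lra.
by rewrite -[k + r]ger0_norm ?ltW // -sqrtr_sqr ltr_sqrt ?exprn_gt0 //; nra.
Qed.

Let mu_sum : mu1 + mu2 = r - k. Proof. by rewrite /mu1 /mu2; field. Qed.

Let mu_prod : mu1 * mu2 = - (r * q).
Proof.
have D2 : D ^+ 2 = (r - k) ^+ 2 + 4 * r * q.
  by rewrite sqr_sqrtr //; move: (sqr_ge0 (r - k)) q_gt0 r_gt0 => *; nra.
have -> : mu1 * mu2 = ((r - k) ^+ 2 - D ^+ 2) / 4 by rewrite /mu1 /mu2; field.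
by rewrite D2; field.
Qed.

Let mu1_lt : `|mu1| < k.
Proof.
by rewrite ltr_norml /mu1; move: k_gt1 r_gt0 r_le_k D_ge0 D_lt => *; apply/andP; split; lra.
Qed.

Let mu2_lt : `|mu2| < k.
Proof.
by rewrite ltr_norml /mu2; move: k_gt1 r_gt0 r_le_k D_ge0 D_lt => *; apply/andP; split; lra.
Qed.

Let x n := s0 n - s1 n.
Let y n := s1 n - s2 n.

Let cvg_x : (fun n => x n / k ^+ n) @ \oo --> 0.
Proof.
apply: (@cvg0_scaled_rec2 _ k (r - k) (r * q)
  ((1 + q) * (a0 - a1) + q * (a1 - a2)) mu1 mu2) => // n.
by rewrite /x !(alt_sum0S, alt_sum1S, alt_sum2S); ring.
Qed.

Let cvg_y : (fun n => y n / k ^+ n) @ \oo --> 0.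
Proof.
apply: (@cvg0_scaled_rec2 _ k (r - k) (r * q)
  ((1 - (r - k + q)) * (a1 - a2) + (k - q) * (a0 - a1)) mu1 mu2) => // n.
by rewrite /y !(alt_sum0S, alt_sum1S, alt_sum2S); ring.
Qed.

Lemma cvg_alt_sum_pos c C :
  (fun n => (alt_sum k q r a0 a1 a2 n c - C) / v n) @ \oo --> alt_limit.
Proof.
rewrite -[alt_limit]addr0 -(mul0r ((k - 1) / k)).
apply: (cvg_div_volume k_gt1 v0 vS (sigma := id) (u := alt_sum k q r a0 a1 a2 ^~ c));
  first exact: cvg_id.
have cvg_xy al be : (fun n => (al * x n + be * y n) / k ^+ n) @ \oo --> 0.
  have -> : (fun n => (al * x n + be * y n) / k ^+ n) =
            (fun n => al * (x n / k ^+ n) + be * (y n / k ^+ n)).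
    by apply/funext => n; rewrite mulrDl !mulrA.
  rewrite (_ : 0 = al * 0 + be * 0); last by rewrite !mulr0 addr0.
  by apply: cvgD; apply: cvgM => //; exact: cvg_cst.
suff [al [be s_eq]] : exists al be, forall n,
    alt_sum k q r a0 a1 a2 n c - alt_limit * v n = al * x n + be * y n.
  by under eq_fun do rewrite s_eq; exact: cvg_xy.
have mean_eq n : alt_limit * v n = (p0 * s0 n + p1 * s1 n + p2 * s2 n) / P.
  by rewrite alt_sum_eigen alt_limitE mulrAC.
have P_neq0 : P != 0 by rewrite gt_eqF.
case: c => /=.
- by exists ((p1 + p2) / P), (p2 / P) => n; rewrite mean_eq /x /y /P; field.
- by exists (- p0 / P), (p2 / P) => n; rewrite mean_eq /x /y /P; field.
- by exists (- p0 / P), (p2 / P) => n; rewrite mean_eq /x /y /P; field.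
- by exists (- p0 / P), (- (p0 + p1) / P) => n; rewrite mean_eq /x /y /P; field.
- by exists (- p0 / P), (- (p0 + p1) / P) => n; rewrite mean_eq /x /y /P; field.
Qed.

End AltSumLimitPositive.

Section AltSumLimitZero.
Variables (R : realType) (k q a0 a1 a2 : R) (v : nat -> R).
Hypotheses (k_gt1 : 1 < k) (v0 : v 0%N = 1) (vS : forall n, v n.+1 = 1 + k * v n).
Local Notation s0 := (alt_sum0 k q 0 a0 a1 a2).
Local Notation s1 := (alt_sum1 k q 0 a0 a1 a2).
Local Notation s2 := (alt_sum2 k q 0 a0 a1 a2).

(* Limits along the depths whose boundary layer carries the labels
   [0, +-h2] (even) or [+-h1] (odd). *)
Definition alt_limit_even : R :=
  (k - q) / (k + 1) * a0 + 1 / (k + 1) * a1 + q / (k + 1) * a2.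
Definition alt_limit_odd : R :=
  (k - q) / (k * (k + 1)) * a0 + k / (k + 1) * a1 + q / (k * (k + 1)) * a2.

Let k_neq0 : k != 0. Proof. by rewrite gt_eqF // (lt_trans ltr01). Qed.
Let k1_neq0 : k + 1 != 0. Proof. by rewrite gt_eqF // addr_gt0 // (lt_trans ltr01). Qed.

Lemma alt_sum2_r0 n : s2 n = s0 n - (a0 - a2).
Proof.
by case: n => [|n]; [rewrite /alt_sum0 /alt_sum2 /= | rewrite alt_sum0S alt_sum2S]; ring.
Qed.

Let b0 := (a0 + k * a1 - k * q * (a0 - a2)) / (k + 1).
Let b1 := (a1 - q * (a0 - a2) + k * a0) / (k + 1).

Let s0_2step n : s0 n.+2 - b0 * v n.+2 = k ^+ 2 * (s0 n - b0 * v n).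
Proof. by rewrite alt_sum0S alt_sum1S alt_sum2_r0 alt_sum0S !vS /b0; field. Qed.

Let s1_2step n : s1 n.+2 - b1 * v n.+2 = k ^+ 2 * (s1 n - b1 * v n).
Proof. by rewrite alt_sum1S alt_sum2_r0 alt_sum0S !vS /b1; field. Qed.

Let double_S m : (2 * m.+1 = (2 * m).+2)%N. Proof. by rewrite mulnS. Qed.
Let double1_S m : ((2 * m.+1).+1 = (2 * m).+3)%N. Proof. by rewrite mulnS. Qed.

Let cvg_s0 C :
  (fun m => (s0 (2 * m) - C) / v (2 * m)) @ \oo --> alt_limit_even /\
  (fun m => (s0 (2 * m).+1 - C) / v (2 * m).+1) @ \oo --> alt_limit_odd.
Proof.
split.
  have := cvg_div_volume_2step k_gt1 v0 vS (sigma := fun m => (2 * m)%N) C double_S s0_2step.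
  suff -> : b0 + (s0 0 - b0 * v 0) / k ^+ 0 * ((k - 1) / k) = alt_limit_even by [].
  by rewrite v0 /alt_sum0 /b0 /alt_limit_even /=; field; rewrite k1_neq0.
have := cvg_div_volume_2step k_gt1 v0 vS (sigma := fun m => (2 * m).+1) C double1_S s0_2step.
suff -> : b0 + (s0 1 - b0 * v 1) / k ^+ 1 * ((k - 1) / k) = alt_limit_odd by [].
by rewrite alt_sum0S vS v0 /alt_sum0 /alt_sum1 /b0 /alt_limit_odd /=; field; rewrite k1_neq0.
Qed.

Let cvg_s1 C :
  (fun m => (s1 (2 * m) - C) / v (2 * m)) @ \oo --> alt_limit_odd /\
  (fun m => (s1 (2 * m).+1 - C) / v (2 * m).+1) @ \oo --> alt_limit_even.
Proof.
split.
  have := cvg_div_volume_2step k_gt1 v0 vS (sigma := fun m => (2 * m)%N) C double_S s1_2step.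
  suff -> : b1 + (s1 0 - b1 * v 0) / k ^+ 0 * ((k - 1) / k) = alt_limit_odd by [].
  by rewrite v0 /alt_sum1 /b1 /alt_limit_odd /=; field; rewrite k1_neq0.
have := cvg_div_volume_2step k_gt1 v0 vS (sigma := fun m => (2 * m).+1) C double1_S s1_2step.
suff -> : b1 + (s1 1 - b1 * v 1) / k ^+ 1 * ((k - 1) / k) = alt_limit_even by [].
by rewrite alt_sum1S vS v0 /alt_sum0 /alt_sum2 /b1 /alt_limit_even /=; field; rewrite k1_neq0.
Qed.

Lemma cvg_alt_sum_r0_even_root c C : c \in [:: L0; Lp2; Lm2] ->
  (fun m => (alt_sum k q 0 a0 a1 a2 (2 * m) c - C) / v (2 * m)) @ \oo --> alt_limit_even /\
  (fun m => (alt_sum k q 0 a0 a1 a2 (2 * m).+1 c - C) / v (2 * m).+1) @ \oo --> alt_limit_odd.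
Proof.
move=> c_in; have [d c_eq] : exists d, forall n, alt_sum k q 0 a0 a1 a2 n c = s0 n - d.
  move: c_in; rewrite !inE => /or3P [] /eqP ->; [exists 0 | exists (a0 - a2) ..] => n;
  by rewrite /= ?subr0 ?alt_sum2_r0.
have shift (j : nat -> nat) : (fun m => (alt_sum k q 0 a0 a1 a2 (j m) c - C) / v (j m)) =
                               (fun m => (s0 (j m) - (C + d)) / v (j m)).
  by apply/funext => m; rewrite c_eq opprD addrAC addrA.
by rewrite (shift (fun m => (2 * m)%N)) (shift (fun m => (2 * m).+1)); exact: cvg_s0.
Qed.

Lemma cvg_alt_sum_r0_odd_root c C : c \in [:: Lp1; Lm1] ->
  (fun m => (alt_sum k q 0 a0 a1 a2 (2 * m) c - C) / v (2 * m)) @ \oo --> alt_limit_odd /\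
  (fun m => (alt_sum k q 0 a0 a1 a2 (2 * m).+1 c - C) / v (2 * m).+1) @ \oo --> alt_limit_even.
Proof. by rewrite !inE => /orP [] /eqP ->; exact: cvg_s1. Qed.

End AltSumLimitZero.

Theorem proposition1 (R : realType) (k q r : nat) (beta J h1 h2 : R)
    (l : vertex k -> lab) :
  (2 <= k)%N -> (1 <= q)%N -> (q <= k - 1)%N -> (r <= k)%N ->
  odd r = odd k ->
  0 < beta ->
  h1 = q%:R * f_theta (tanh (beta * J)) h2 ->
  h2 = k%:R * f_theta (tanh (beta * J)) h1 ->
  alternating_bc k q r l ->
  let h := bc h1 h2 l in
  let a := a_fun beta J in
  let F := fun n => Fn k n beta J h in
  let kR := (k%:R : R) in let qR := (q%:R : R) in let rR := (r%:R : R) in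
  ((r != 0)%N ->
     F @ \oo --> kR * (kR - qR) / (2 * kR ^+ 2 - rR * kR - rR * qR) *
        (a 0 + (kR - rR) / (kR - qR) * a h1
             + qR * (kR - rR) / (kR * (kR - qR)) * a h2))
  /\ (r = 0%N -> l [::] \in [:: L0; Lp2; Lm2] ->
     (fun m => F (2 * m)%N) @ \oo -->
        (kR - qR) / (kR + 1) * a 0 + 1 / (kR + 1) * a h1 + qR / (kR + 1) * a h2
     /\ (fun m => F (2 * m).+1) @ \oo -->
        (kR - qR) / (kR * (kR + 1)) * a 0 + kR / (kR + 1) * a h1
          + qR / (kR * (kR + 1)) * a h2)
  /\ (r = 0%N -> l [::] \in [:: Lp1; Lm1] ->
     (fun m => F (2 * m)%N) @ \oo -->
        (kR - qR) / (kR * (kR + 1)) * a 0 + kR / (kR + 1) * a h1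
          + qR / (kR * (kR + 1)) * a h2
     /\ (fun m => F (2 * m).+1) @ \oo -->
        (kR - qR) / (kR + 1) * a 0 + 1 / (kR + 1) * a h1 + qR / (kR + 1) * a h2).
Proof.
move=> k_ge2 q_ge1 q_lt_k r_le_k odd_r beta_gt0 h1_eq h2_eq l_alt h a F kR qR rR.
have q_le_k : (q <= k)%N by lia.
pose v n : R := (size (words k n))%:R.
have v0 : v 0%N = 1 by [].
have vS n : v n.+1 = 1 + kR * v n.
  by rewrite /v size_wordsS -addn1 natrD natrM addrC mulrC.
have F_eq : F = fun n =>
    (alt_sum kR qR rR (a 0) (a h1) (a h2) n (l [::]) - root_correction beta J h) / v n.
  by apply/funext => n; rewrite /F (Fn_bc q_le_k r_le_k odd_r h1_eq h2_eq beta_gt0 n l_alt).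
have k_gt1 : 1 < kR by rewrite ltr1n.
rewrite F_eq; split; [|split] => [r_neq0 | r0 root | r0 root].
- by apply: cvg_alt_sum_pos; rewrite ?ltr1n ?ltr0n ?ltr_nat ?ler_nat // ?lt0n; lia.
- by rewrite /rR r0; exact: cvg_alt_sum_r0_even_root.
- by rewrite /rR r0; exact: cvg_alt_sum_r0_odd_root.
Qed.
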